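(* Let $(A_n)_{n\ge1}$ be a sequence of nonnegative integer matrices, $A_n$ of size $f(n+1)\times f(n)$, such that each $A_n$ has all column sums equal, and such that the direct limit $G$ of $\mathbb Z^{f(1)}\xrightarrow{A_1}\mathbb Z^{f(2)}\xrightarrow{A_2}\cdots$ (with the induced ordering) is a simple non-cyclic dimension group. Then $G$ is globally irrationally miscible.
   Context: The direct limit is ordered by the union of the images of $\mathbb Z_+^{f(n)}$. A dimension group is simple if it has no nontrivial order ideals. For an order unit $u$, $S(G,u)$ is the set of states (homomorphisms $\sigma:G\to\mathbb R$, $\sigma(G^+)\ge0$, $\sigma(u)=1$); $J(G,u)=\{g:\sigma\mapsto\sigma(g)\text{ constant on }S(G,u)\}$ with $\Phi(g)$ the constant. $(G,u)$ is irrationally miscible if $\Phi(J(G,u))\subseteq\mathbb Q$; $G$ is globally irrationally miscible if this holds for every order unit $u$. *)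

From HB Require Import structures.
From mathcomp Require Import all_boot all_order all_algebra.
From mathcomp Require Export reals.
Set Implicit Arguments. Unset Strict Implicit. Unset Printing Implicit Defensive.
Import Order.TTheory GRing.Theory Num.Theory.
Local Open Scope ring_scope.

(* The direct limit G of Z^{f 0} --A 0--> Z^{f 1} --A 1--> ... is modelled
   as the group of eventually compatible sequences ("threads")
   g : forall m, Z^{f m}  (g (m+1) = A m g m for all large m),
   modulo eventual equality.  Elements of G are handled via representatives;
   every notion below is stated on threads and respects eventual equality. *)

Definition Thr (f : nat -> nat) := forall m : nat, 'cV[int]_(f m).

Section DirectLimit.
Variable (f : nat -> nat) (A : forall n : nat, 'M[int]_(f n.+1, f n)).

Definition thread (g : Thr f) : Prop :=
  exists n, forall m, (n <= m)%N -> g m.+1 = A m *m g m.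

Definition eqG (g h : Thr f) : Prop :=
  exists n, forall m, (n <= m)%N -> g m = h m.

Definition thr0 : Thr f := fun m => 0.
Definition thr_add (g h : Thr f) : Thr f := fun m => g m + h m.
Definition thr_opp (g : Thr f) : Thr f := fun m => - g m.
Definition thr_sub (g h : Thr f) : Thr f := fun m => g m - h m.
Definition thr_natmul (g : Thr f) (N : nat) : Thr f := fun m => g m *+ N.
Definition thr_intmul (g : Thr f) (z : int) : Thr f := fun m => g m *~ z.

(* positive cone of G: union of the images of Z_+^{f n} *)
Definition geq0 (g : Thr f) : Prop :=
  exists n, forall m, (n <= m)%N -> forall i, 0 <= g m i 0.

Definition leG (g h : Thr f) : Prop := geq0 (thr_sub h g).

Definition order_ideal (I : Thr f -> Prop) : Prop :=
  [/\ (forall g h, thread g -> thread h -> eqG g h -> I g -> I h),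
      I thr0,
      (forall g h, thread g -> thread h -> I g -> I h -> I (thr_sub g h)),
      (forall g, thread g -> I g ->
         (exists a b, [/\ thread a /\ thread b, I a /\ I b, geq0 a /\ geq0 b &
                         eqG g (thr_sub a b)])) &
      (forall a b, thread a -> thread b -> geq0 a -> leG a b -> I b -> I a)].

Definition simpleG : Prop :=
  forall I, order_ideal I ->
    (forall g, thread g -> I g -> eqG g thr0) \/ (forall g, thread g -> I g).

Definition cyclicG : Prop :=
  exists g, thread g /\
    forall h, thread h -> exists z : int, eqG h (thr_intmul g z).

Definition order_unit (u : Thr f) : Prop :=
  [/\ thread u, geq0 u &
      forall g, thread g -> exists N : nat, leG g (thr_natmul u N)].

Definition is_state (R : realType) (u : Thr f) (s : Thr f -> R) : Prop :=
  [/\ (forall g h, thread g -> thread h -> eqG g h -> s g = s h),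
      (forall g h, thread g -> thread h -> s (thr_add g h) = s g + s h),
      (forall g, thread g -> geq0 g -> 0 <= s g) &
      s u = 1].

Definition irrationally_miscible (R : realType) (u : Thr f) : Prop :=
  forall g, thread g -> forall c : R,
    (forall s, is_state u s -> s g = c) -> exists q : rat, c = ratr q.

Definition globally_irrationally_miscible (R : realType) : Prop :=
  forall u, order_unit u -> irrationally_miscible R u.

End DirectLimit.

From HB Require Import structures.
From mathcomp Require Import all_boot all_order all_algebra.
From mathcomp Require Import reals.
From Stdlib Require Import ClassicalEpsilon Classical.
Set Implicit Arguments.
Unset Strict Implicit.
Unset Printing Implicit Defensive.
Import Order.TTheory GRing.Theory Num.Theory.
Local Open Scope ring_scope.

(* Since every A_n has a constant column sum c_n, the total mass (sum of
   entries) of a vector is multiplied by c_n under A_n.  Hence, once the c_n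
   are nonzero (which is forced as soon as G is nontrivial), the mass of g_m
   divided by c_K ... c_(m-1) is eventually constant in m.  This defines a
   positive additive functional on G with values in Q; normalizing it at an
   order unit u gives a Q-valued state of (G,u), so every element on which
   all states agree takes a rational value there. *)

Definition eventually (P : nat -> Prop) : Prop :=
  exists N, forall m, (N <= m)%N -> P m.

Lemma eventually_and (P Q : nat -> Prop) :
  eventually P -> eventually Q -> eventually (fun m => P m /\ Q m).
Proof.
move=> [N hP] [M hQ]; exists (maxn N M) => m hm.
by split; [apply: hP | apply: hQ]; apply: leq_trans hm; rewrite ?leq_maxl ?leq_maxr.
Qed.

Lemma eventually_mono (P Q : nat -> Prop) :
  eventually P -> (forall m, P m -> Q m) -> eventually Q.
Proof. by move=> [N hP] PQ; exists N => m /hP /PQ. Qed.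

Lemma eventually_witness (P : nat -> Prop) : eventually P -> exists m, P m.
Proof. by move=> [N hP]; exists N; apply: hP. Qed.

Lemma eventually_constant (T : Type) (u : nat -> T) :
  eventually (fun m => u m.+1 = u m) -> exists c, eventually (fun m => u m = c).
Proof.
move=> [N hN]; exists (u N); exists N => m /subnK <-.
by elim: (m - N)%N => //= d IHd; rewrite addSn hN ?IHd // leq_addl.
Qed.

Definition eventual_value (T : Type) (x0 : T) (u : nat -> T) : T :=
  epsilon (inhabits x0) (fun c => eventually (fun m => u m = c)).

Lemma eventual_valueE (T : Type) (x0 : T) (u : nat -> T) c :
  eventually (fun m => u m = c) -> eventual_value x0 u = c.
Proof.
move=> uc.
have uv : eventually (fun m => u m = eventual_value x0 u).
  exact: (epsilon_spec (inhabits x0) (fun c => eventually (fun m => u m = c))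
                      (ex_intro _ c uc)).
by have [m [<- <-]] := eventually_witness (eventually_and uv uc).
Qed.

Definition mass (R : nmodType) n (v : 'cV[R]_n) : R := \sum_i v i 0.

Lemma massD (R : nmodType) n (v w : 'cV[R]_n) : mass (v + w) = mass v + mass w.
Proof. by rewrite /mass -big_split; apply: eq_bigr => i _; rewrite mxE. Qed.

Lemma mass_mulmx (R : pzRingType) p q (M : 'M[R]_(p, q)) (c : R) (v : 'cV[R]_q) :
  (forall j, \sum_i M i j = c) -> mass (M *m v) = c * mass v.
Proof.
move=> Mc; rewrite /mass; under eq_bigr do rewrite mxE.
by rewrite exchange_big mulr_sumr; apply: eq_bigr => j _; rewrite -mulr_suml Mc.
Qed.

Lemma mass_ge0 (R : numDomainType) n (v : 'cV[R]_n) :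
  (forall i, 0 <= v i 0) -> 0 <= mass v.
Proof. by move=> v_ge0; apply: sumr_ge0 => i _. Qed.

Lemma mass_eq0 (R : numDomainType) n (v : 'cV[R]_n) :
  (forall i, 0 <= v i 0) -> mass v = 0 -> v = 0.
Proof.
move=> v_ge0 /psumr_eq0P v0; apply/matrixP => i j.
by rewrite (ord1 j) mxE v0.
Qed.

Section DirectLimitThreads.
Variables (f : nat -> nat) (A : forall n : nat, 'M[int]_(f n.+1, f n)).

Definition trivialG : Prop := forall h, thread A h -> eqG h (thr0 f).

Lemma thread_add (g h : Thr f) :
  thread A g -> thread A h -> thread A (thr_add g h).
Proof.
move=> tg th; apply: eventually_mono (eventually_and tg th) _ => m [gm hm].
by rewrite /thr_add gm hm mulmxDr.
Qed.

Lemma thread_opp (g : Thr f) : thread A g -> thread A (thr_opp g).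
Proof. by move=> tg; apply: eventually_mono tg _ => m gm; rewrite /thr_opp gm mulmxN. Qed.

Lemma cyclicG_of_trivial : trivialG -> cyclicG A.
Proof.
move=> triv; exists (thr0 f); split; first by exists 0%N => m _; rewrite mulmx0.
move=> h th; exists 0; apply: eventually_mono (triv h th) _ => m ->.
by rewrite /thr_intmul mulr0z.
Qed.

(* -N u <= h <= N u forces h = 0 once u = 0 in G. *)
Lemma trivial_of_order_unit_eq0 (u : Thr f) :
  order_unit A u -> eqG u (thr0 f) -> trivialG.
Proof.
move=> [_ _ ou] u0 h th.
have [N hN] := ou h th; have [N' hN'] := ou _ (thread_opp th).
apply: eventually_mono (eventually_and u0 (eventually_and hN hN')) _.
move=> m [um [le_h le_opph]]; apply/matrixP => i j; rewrite (ord1 j) mxE.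
move: (le_h i) (le_opph i); rewrite /thr_sub /thr_natmul /thr_opp um !mxE.
rewrite /thr0 !mul0rn !mxE !sub0r opprK oppr_ge0 => h_le0 h_ge0.
by apply/eqP; rewrite eq_le h_le0 h_ge0.
Qed.

Lemma irrationally_miscible_of_rat_state (R : realType) u (q : Thr f -> rat) :
  is_state A u (fun h => (ratr (q h) : R)) -> irrationally_miscible A R u.
Proof. by move=> st g _ c hc; exists (q g); rewrite -(hc _ st). Qed.

Lemma is_state_ratr_div (R : realType) u (q : Thr f -> rat) :
  (forall g h, thread A g -> thread A h -> eqG g h -> q g = q h) ->
  (forall g h, thread A g -> thread A h -> q (thr_add g h) = q g + q h) ->
  (forall g, thread A g -> geq0 g -> 0 <= q g) ->
  0 < q u ->
  is_state A u (fun h => (ratr (q h / q u) : R)).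
Proof.
move=> q_eq q_add q_ge0 qu_gt0; split.
- by move=> g h tg th /q_eq ->.
- by move=> g h tg th; rewrite q_add // mulrDl rmorphD.
- by move=> g tg /q_ge0 g_ge0; rewrite ler0q divr_ge0 ?g_ge0 ?ltW.
- by rewrite divff ?gt_eqF // rmorph1.
Qed.

Hypothesis A_ge0 : forall n i j, 0 <= A n i j.
Hypothesis A_colsum : forall n, exists c : int, forall j, \sum_i A n i j = c.

(* The value is irrelevant when A n has no columns. *)
Definition colsum n : int :=
  if [pick j : 'I_(f n)] is Some j then \sum_i A n i j else 0.

Lemma colsumP n j : \sum_i A n i j = colsum n.
Proof.
rewrite /colsum; case: pickP => [j0 _|/(_ j) //].
by have [c hc] := A_colsum n; rewrite !hc.
Qed.

Lemma colsum_ge0 n : 0 <= colsum n.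
Proof.
rewrite /colsum; case: pickP => [j _|_] //.
by apply: sumr_ge0 => i _; apply: A_ge0.
Qed.

Lemma colsum_eq0 n : colsum n = 0 -> A n = 0.
Proof.
move=> c0; apply/matrixP => i j; rewrite mxE.
by move: (colsumP j); rewrite c0 => /psumr_eq0P ->.
Qed.

Lemma thread_eq0_after_colsum_eq0 (g : Thr f) (N k : nat) :
  (forall m, (N <= m)%N -> g m.+1 = A m *m g m) -> (N <= k)%N -> colsum k = 0 ->
  forall m, (k < m)%N -> g m = 0.
Proof.
move=> gN Nk /colsum_eq0 Ak0; elim=> // m IHm; rewrite ltnS leq_eqVlt.
case/predU1P => [<-|km]; first by rewrite gN // Ak0 mul0mx.
by rewrite gN ?IHm ?mulmx0 // (leq_trans Nk (ltnW km)).
Qed.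

Lemma colsum_eventually_neq0 : ~ trivialG -> eventually (fun k => colsum k != 0).
Proof.
move=> nontriv; apply: NNPP => not_ev; apply: nontriv => h [N hN].
have [k Nk ck0] : exists2 k, (N <= k)%N & colsum k = 0.
  apply: NNPP => no_k; apply: not_ev; exists N => k Nk; apply/eqP => ck0.
  by apply: no_k; exists k.
by exists k.+1 => m km; rewrite (thread_eq0_after_colsum_eq0 hN Nk ck0).
Qed.

Section NormalizedMass.
Variable K : nat.

Definition colprod m : rat := \prod_(K <= k < m) (colsum k)%:~R.

Definition nmass (g : Thr f) m : rat := (mass (g m))%:~R / colprod m.

Definition dmass (g : Thr f) : rat := eventual_value 0 (nmass g).

Lemma colprod_ge0 m : 0 <= colprod m.
Proof. by apply: prodr_ge0 => k _; rewrite ler0z colsum_ge0. Qed.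

Lemma nmassD (g h : Thr f) m : nmass (thr_add g h) m = nmass g m + nmass h m.
Proof. by rewrite /nmass /thr_add massD intrD mulrDl. Qed.

Lemma nmass_ge0 (g : Thr f) m : (forall i, 0 <= g m i 0) -> 0 <= nmass g m.
Proof. by move=> gm_ge0; rewrite divr_ge0 ?colprod_ge0 // ler0z mass_ge0. Qed.

Hypothesis colsum_neq0 : forall k, (K <= k)%N -> colsum k != 0.

Lemma colprod_gt0 m : 0 < colprod m.
Proof.
rewrite /colprod big_nat_cond; apply: prodr_gt0 => k /andP[/andP[Kk _] _].
by rewrite ltr0z lt0r colsum_neq0 // colsum_ge0.
Qed.

Lemma nmass_eq0 (g : Thr f) m : (forall i, 0 <= g m i 0) -> nmass g m = 0 -> g m = 0.
Proof.
move=> gm_ge0 /eqP; rewrite mulf_eq0 invr_eq0 (gt_eqF (colprod_gt0 m)) orbF.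
by rewrite intr_eq0 => /eqP /(mass_eq0 gm_ge0).
Qed.

Lemma nmass_step (g : Thr f) m :
  (K <= m)%N -> g m.+1 = A m *m g m -> nmass g m.+1 = nmass g m.
Proof.
move=> Km gm; rewrite /nmass /colprod gm (mass_mulmx _ (@colsumP m)).
rewrite big_nat_recr //= intrM [_ * (colsum m)%:~R]mulrC invfM mulrACA.
by rewrite mulfV ?mul1r // intr_eq0 colsum_neq0.
Qed.

Lemma dmassE (g : Thr f) : thread A g -> eventually (fun m => nmass g m = dmass g).
Proof.
move=> tg; have [c gc] : exists c, eventually (fun m => nmass g m = c).
  apply: eventually_constant; have [N gN] := tg.
  exists (maxn N K) => m; rewrite geq_max => /andP[Nm Km].
  by apply: nmass_step; rewrite ?gN.
by rewrite /dmass (eventual_valueE 0 gc).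
Qed.

Lemma dmass_eqG (g h : Thr f) :
  thread A g -> thread A h -> eqG g h -> dmass g = dmass h.
Proof.
move=> tg th gh; have gh_ev := eventually_and (dmassE tg) (dmassE th).
have [m [[<- <-] ghm]] := eventually_witness (eventually_and gh_ev gh).
by rewrite /nmass ghm.
Qed.

Lemma dmassD (g h : Thr f) :
  thread A g -> thread A h -> dmass (thr_add g h) = dmass g + dmass h.
Proof.
move=> tg th; have gh_ev := eventually_and (dmassE tg) (dmassE th).
have [m [[<- <-] <-]] :=
  eventually_witness (eventually_and gh_ev (dmassE (thread_add tg th))).
exact: nmassD.
Qed.

Lemma dmass_ge0 (g : Thr f) : thread A g -> geq0 g -> 0 <= dmass g.
Proof.
move=> tg g_ge0.
by have [m [<- /nmass_ge0]] := eventually_witness (eventually_and (dmassE tg) g_ge0).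
Qed.

Lemma dmass_order_unit_gt0 (u : Thr f) :
  ~ trivialG -> order_unit A u -> 0 < dmass u.
Proof.
move=> nontriv hu; have [tu u_ge0 _] := hu; rewrite lt_def dmass_ge0 // andbT.
apply/eqP => du0; apply/nontriv/(trivial_of_order_unit_eq0 hu).
apply: eventually_mono (eventually_and (dmassE tu) u_ge0) _ => m [um um_ge0].
by apply: nmass_eq0; rewrite ?um.
Qed.

End NormalizedMass.
End DirectLimitThreads.

Theorem mainTheorem14 (R : realType) (f : nat -> nat)
  (A : forall n : nat, 'M[int]_(f n.+1, f n))
  (hA_nonneg : forall n i j, 0 <= A n i j)
  (hA_cols : forall n, exists c : int, forall j, \sum_i A n i j = c)
  (hsimple : simpleG A)
  (hnoncyc : ~ cyclicG A) :
  globally_irrationally_miscible A R.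
Proof.
move=> u hu.
have nontriv : ~ trivialG A by move/cyclicG_of_trivial.
have [K colsum_neq0] := colsum_eventually_neq0 hA_nonneg hA_cols nontriv.
apply: (irrationally_miscible_of_rat_state (q := fun h => dmass A K h / dmass A K u)).
apply: is_state_ratr_div.
- exact: dmass_eqG.
- exact: dmassD.
- exact: dmass_ge0.
- exact: dmass_order_unit_gt0 nontriv hu.
Qed.
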